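(* Let $N$ be a non-negative integer and $c_0,\dots,c_4$ parameters with $c_0+c_1+c_2+c_3+c_4=-2N-3$. For non-negative integers $i,j,x,y$ with $i+j\le N$ and $x+y\le N$, \[ \frac{T_{i,j}(x,y;c_1,c_2,c_3,c_4;N)}{\Omega(i;c_1,c_2,c_3;N-j)\,\Lambda(j;c_4,c_0;N)}=\frac{T_{y,x}(j,i;c_4,c_0,c_3,c_1;N)}{\Omega(y;c_4,c_0,c_3;N-x)\,\Lambda(x;c_1,c_2;N)}. \]
   Context: Notation: $(a)_n=a(a+1)\cdots(a+n-1)$, $(a)_0=1$; $c_{ij}=c_i+c_j$, $c_{ijk}=c_i+c_j+c_k$. Parameters are generic so that no denominator vanishes. For $0\le n,x\le N$: \[ \Omega(n;c_1,c_2,c_3;N)=\binom{N}{n}(2n+c_{23}+1)\frac{(c_2+1)_n(N+2+c_{123})_n(c_1+1)_{N-n}}{(c_3+1)_n(c_{23}+n+1)_{N+1}}, \] \[ p_n(x;c_1,c_2,c_3;N)=\Omega(n;c_1,c_2,c_3;N)\,{}_4F_3\!\left(\begin{matrix}-n,\ n+c_{23}+1,\ -x,\ x+c_{12}+1\\ c_2+1,\ N+2+c_{123},\ -N\end{matrix};1\right) \] (terminating sum), and $\Lambda(x;c_1,c_2;N)=(-1)^x\binom{N}{x}(2x+c_{12}+1)\frac{(c_2+1)_x}{(c_1+1)_x(x+c_{12}+1)_{N+1}}$. For parameters $(a_1,a_2,a_3,a_4)$, set $a_0=-2N-3-a_1-a_2-a_3-a_4$ and define, for non-negative integers $i,j,x,y$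 with $i+j\le N$, $x+y\le N$, \[ T_{i,j}(x,y;a_1,a_2,a_3,a_4;N)=p_i(x;a_1,a_2,a_3;N-j)\,p_j(y;a_3,a_0,a_4;N-x). \] In particular, in $T_{y,x}(j,i;c_4,c_0,c_3,c_1;N)$ the role of $a_0$ is played by $c_2$. *)

From HB Require Import structures.
From mathcomp Require Import all_boot all_order all_algebra.
Set Implicit Arguments. Unset Strict Implicit. Unset Printing Implicit Defensive.
Import Order.TTheory GRing.Theory Num.Theory.
Local Open Scope ring_scope.

Section Defs.
Variable R : numFieldType.

Definition poch (a : R) (n : nat) : R := \prod_(k < n) (a + k%:R).

Definition Omega (n : nat) (c1 c2 c3 : R) (N : nat) : R :=
  ('C(N, n))%:R * (2 * n%:R + (c2 + c3) + 1)
  * (poch (c2 + 1) n * poch (N%:R + 2 + (c1 + c2 + c3)) n * poch (c1 + 1) (N - n))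
  / (poch (c3 + 1) n * poch (c2 + c3 + n%:R + 1) N.+1).

(* terminating 4F3(-n, n+c23+1, -x, x+c12+1; c2+1, N+2+c123, -N; 1),
   as a terminating sum over k = 0..min(n,x): all later terms have a vanishing
   numerator factor (-n)_k or (-x)_k (summing only these avoids 0/0 from
   (-N)_k when k > N, which can occur in T for p_j(y;..;N-x) with j > N-x) *)
Definition F43 (n x : nat) (c1 c2 c3 : R) (N : nat) : R :=
  \sum_(k < (minn n x).+1)
     (poch (- n%:R) k * poch (n%:R + (c2 + c3) + 1) k
      * poch (- x%:R) k * poch (x%:R + (c1 + c2) + 1) k)
   / (poch (c2 + 1) k * poch (N%:R + 2 + (c1 + c2 + c3)) k
      * poch (- N%:R) k * (k`!)%:R).

Definition pn (n x : nat) (c1 c2 c3 : R) (N : nat) : R :=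
  Omega n c1 c2 c3 N * F43 n x c1 c2 c3 N.

Definition Lambda (x : nat) (c1 c2 : R) (N : nat) : R :=
  (-1) ^+ x * ('C(N, x))%:R * (2 * x%:R + (c1 + c2) + 1)
  * (poch (c2 + 1) x / (poch (c1 + 1) x * poch (x%:R + (c1 + c2) + 1) N.+1)).

Definition T (i j x y : nat) (a1 a2 a3 a4 : R) (N : nat) : R :=
  let a0 := - (2 * N%:R + 3) - a1 - a2 - a3 - a4 in
  pn i x a1 a2 a3 (N - j) * pn j y a3 a0 a4 (N - x).

(* Genericity: the denominators occurring in p_n(.; c1,c2,c3; N) do not vanish
   ((a)_n <> 0 implies (a)_k <> 0 for k <= n; (-N)_k <> 0 automatically for k <= n <= N). *)
Definition p_generic (n : nat) (c1 c2 c3 : R) (N : nat) : Prop :=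
  [/\ poch (c3 + 1) n != 0, poch (c2 + c3 + n%:R + 1) N.+1 != 0,
      poch (c2 + 1) n != 0 & poch (N%:R + 2 + (c1 + c2 + c3)) n != 0].

Definition Lambda_generic (x : nat) (c1 c2 : R) (N : nat) : Prop :=
  poch (c1 + 1) x != 0 /\ poch (x%:R + (c1 + c2) + 1) N.+1 != 0.

End Defs.

From mathcomp Require Import all_boot all_order all_algebra.
From mathcomp Require Import ring zify.
Import GRing.Theory Num.Theory.
Set Implicit Arguments.
Unset Strict Implicit.
Unset Printing Implicit Defensive.
Local Open Scope ring_scope.

(* The terminating 4F3 is symmetric under swapping its pairs (n, c1) and
   (x, c3) of parameters, so both sides carry the same two 4F3 factors.  What
   remains is Omega_j(c3, c0, c4; N - x) / Lambda_j(c4, c0; N) on the left and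
   the same ratio with (j, c0, c4) and (x, c2, c1) exchanged on the right; using
   c0 + ... + c4 = -2N - 3, both reduce to one expression symmetric in the swap. *)

Lemma mul_bin_subC (N x j : nat) : (x <= N)%N -> (j <= N)%N ->
  ('C(N - x, j) * 'C(N, x) = 'C(N - j, x) * 'C(N, j))%N.
Proof.
move=> xN jN; have [xjN | Nxj] := leqP (x + j) N; last first.
  by rewrite (@bin_small (N - x)) 1?(@bin_small (N - j)) ?mul0n //; lia.
have jNx : (j <= N - x)%N by lia.
have xNj : (x <= N - j)%N by lia.
apply/eqP; rewrite -(eqn_pmul2r (fact_gt0 x)) -(eqn_pmul2r (fact_gt0 j))
  -(eqn_pmul2r (fact_gt0 (N - x - j))); apply/eqP.
transitivity N`!; first by rewrite -(bin_fact xN) -(bin_fact jNx); ring.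
by rewrite -(bin_fact jN) -(bin_fact xNj) subnAC; ring.
Qed.

Section Racah.
Variable R : numFieldType.

Lemma pochD (a : R) m n : poch a (m + n) = poch a m * poch (a + m%:R) n.
Proof.
rewrite /poch big_split_ord /=; congr (_ * _); apply: eq_bigr => k _.
by rewrite /= natrD addrA.
Qed.

Lemma pochS (a : R) n : poch a n.+1 = poch a n * (a + n%:R).
Proof. by rewrite /poch big_ord_recr. Qed.

Lemma pochSl (a : R) n : poch a n.+1 = a * poch (a + 1) n.
Proof. by rewrite -add1n pochD /poch big_ord1 addr0. Qed.

Lemma pochN (b : R) n :
  poch (- (b + n%:R - 1)) n = (-1) ^+ n * poch b n.
Proof.
elim: n => [|n IHn]; first by rewrite /poch !big_ord0 expr0 mulr1.
rewrite pochSl.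
have -> : - (b + n.+1%:R - 1) + 1 = - (b + n%:R - 1) by rewrite -natr1; ring.
by rewrite IHn pochS exprS -natr1; ring.
Qed.

Lemma F43C n x (c1 c2 c3 : R) N : F43 n x c1 c2 c3 N = F43 x n c3 c2 c1 N.
Proof.
rewrite /F43 minnC; apply: eq_bigr => k _.
have -> : c3 + c2 + c1 = c1 + c2 + c3 by ring.
by rewrite (addrC c2 c1) (addrC c3 c2); congr (_ / _); ring.
Qed.

(* The long Pochhammer symbol of Lambda is the one of Omega times a tail that,
   by the constraint on the c's, is a reflected Pochhammer symbol; the result
   is visibly symmetric under (j, c0, c4) <-> (x, c2, c1). *)
Lemma Omega_Lambda_ratio (N j x : nat) (c0 c1 c2 c3 c4 : R) :
  c0 + c1 + c2 + c3 + c4 = - (2 * N%:R + 3) -> (x <= N)%N -> (j <= N)%N ->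
  Lambda j c4 c0 N != 0 ->
  Omega j c3 c0 c4 (N - x) / Lambda j c4 c0 N
  = (-1) ^+ (j + x) * ('C(N - x, j) * 'C(N, x))%:R / ('C(N, j) * 'C(N, x))%:R
    * poch ((N - x)%:R + 2 + (c3 + c0 + c4)) j
    * poch ((N - j)%:R + 2 + (c1 + c2 + c3)) x * poch (c3 + 1) (N - x - j).
Proof.
move=> hsum xN jN L0.
have Lambda_poch_split : poch (j%:R + (c4 + c0) + 1) N.+1
    = poch (c0 + c4 + j%:R + 1) (N - x).+1
      * ((-1) ^+ x * poch ((N - j)%:R + 2 + (c1 + c2 + c3)) x).
  have -> : N.+1 = ((N - x).+1 + x)%N by lia.
  rewrite pochD -pochN; congr (poch _ _ * poch _ _); first ring.
  have -> : c4 + c0 = - (2 * N%:R + 3) - c1 - c2 - c3 by rewrite -hsum; ring.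
  by rewrite -[(N - x).+1%:R]natr1 !natrB //; ring.
move: L0; rewrite /Lambda Lambda_poch_split !mulf_eq0 !invr_eq0 !mulf_eq0 !negb_or.
case/and5P=> /andP[/andP[_ C0] d0] a0 a4 a04 _.
have Cx : 'C(N, x)%:R != 0 :> R by rewrite pnatr_eq0 -lt0n bin_gt0.
rewrite (addrC c4 c0) in d0 *; rewrite /Omega exprD !natrM !invfM !invrK invr_sign.
field.
by rewrite C0 Cx d0 a0 a4 a04.
Qed.

Lemma Omega_Lambda_ratio_sym (N j x : nat) (c0 c1 c2 c3 c4 : R) :
  c0 + c1 + c2 + c3 + c4 = - (2 * N%:R + 3) -> (x <= N)%N -> (j <= N)%N ->
  Lambda j c4 c0 N != 0 -> Lambda x c1 c2 N != 0 ->
  Omega j c3 c0 c4 (N - x) / Lambda j c4 c0 N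
  = Omega x c3 c2 c1 (N - j) / Lambda x c1 c2 N.
Proof.
move=> hsum xN jN Lj Lx.
have hsum' : c2 + c4 + c0 + c3 + c1 = - (2 * N%:R + 3) by rewrite -hsum; ring.
rewrite (Omega_Lambda_ratio hsum) // (Omega_Lambda_ratio hsum') //.
rewrite addnC mul_bin_subC // [('C(N, j) * _)%N]mulnC subnAC.
have -> : c3 + c2 + c1 = c1 + c2 + c3 by ring.
have -> : c4 + c0 + c3 = c3 + c0 + c4 by ring.
by rewrite [_ * poch _ x]mulrAC.
Qed.

End Racah.

Theorem mainTheorem2 (R : numFieldType) (N : nat) (c0 c1 c2 c3 c4 : R)
  (i j x y : nat)
  (hsum : c0 + c1 + c2 + c3 + c4 = - (2 * N%:R + 3))
  (hij : (i + j <= N)%N) (hxy : (x + y <= N)%N)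
  (* genericity: no denominator vanishes *)
  (g1 : p_generic i c1 c2 c3 (N - j)) (g2 : p_generic j c3 c0 c4 (N - x))
  (g3 : p_generic y c4 c0 c3 (N - x)) (g4 : p_generic x c3 c2 c1 (N - j))
  (g5 : Lambda_generic j c4 c0 N) (g6 : Lambda_generic x c1 c2 N)
  (d1 : Omega i c1 c2 c3 (N - j) != 0) (d2 : Lambda j c4 c0 N != 0)
  (d3 : Omega y c4 c0 c3 (N - x) != 0) (d4 : Lambda x c1 c2 N != 0) :
  T i j x y c1 c2 c3 c4 N / (Omega i c1 c2 c3 (N - j) * Lambda j c4 c0 N)
  = T y x j i c4 c0 c3 c1 N / (Omega y c4 c0 c3 (N - x) * Lambda x c1 c2 N).
Proof.
have jN : (j <= N)%N by lia.
have xN : (x <= N)%N by lia.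
have a0_eq : - (2 * N%:R + 3) - c1 - c2 - c3 - c4 = c0 by rewrite -hsum; ring.
have a0_eq' : - (2 * N%:R + 3) - c4 - c0 - c3 - c1 = c2 by rewrite -hsum; ring.
rewrite /T /= a0_eq a0_eq' /pn (F43C i x) (F43C j y).
set Fxi := F43 x i c3 c2 c1 (N - j); set Fyj := F43 y j c4 c0 c3 (N - x).
transitivity (Fxi * Fyj * (Omega j c3 c0 c4 (N - x) / Lambda j c4 c0 N)).
  by field; rewrite d1 d2.
rewrite (Omega_Lambda_ratio_sym hsum xN jN d2 d4).
by field; rewrite d3 d4.
Qed.
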